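(* Let $R$ be a commutative ring with $2\in R^\times$. Define $\eta:GL(R)\to W'_E(R)$ by sending $G\in GL_{2n}(R)$ to the class of $G^t\psi_{2n}G$ and $G\in GL_{2n+1}(R)$ to the class of $(G\perp 1)^t\psi_{2n+2}(G\perp1)$. Then $\eta$ is well defined and induces a group homomorphism $\eta:K_1(R)\to W'_E(R)$.
   Context: $M\perp N$ denotes the block diagonal matrix $\begin{pmatrix}M&0\\0&N\end{pmatrix}$; $GL(R)=\bigcup_n GL_n(R)$ via $G\mapsto G\perp 1$, and $K_1(R)=GL(R)/E(R)$ with $E(R)$ the elementary subgroup. Let $\psi_2=\begin{pmatrix}0&1\\-1&0\end{pmatrix}$ and $\psi_{2r}=\psi_2\perp\psi_{2r-2}$. Let $S'_{2n}(R)$ be the set of invertible alternating $2n\times 2n$ matrices over $R$; for $m<n$, $S'_{2m}(R)\subset S'_{2n}(R)$ via $G\mapsto G\perp\psi_{2n-2m}$, and $S'(R)=\bigcup_n S'_{2n}(R)$. For $G\in S'_{2n}(R)$, $G'\in S'_{2m}(R)$, $G\sim G'$ iff there are $t\in\mathbb N$ and $E\in E_{2(m+n+t)}(R)$ with $G\perp\psi_{2(m+t)}=E^t(G'\perp\psi_{2(n+t)})E$. $W'_E(R):=S'(R)/\sim$ is an abelian group under $\perp$ with neutral element the class of $\psi_2$. *)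

From mathcomp Require Import all_boot all_order all_algebra.
Set Implicit Arguments. Unset Strict Implicit. Unset Printing Implicit Defensive.
Import GRing.Theory.
Local Open Scope ring_scope.

Section Defs.
Variable R : comUnitRingType.

Definition perp m n (M : 'M[R]_m) (N : 'M[R]_n) : 'M[R]_(m + n) :=
  block_mx M 0 0 N.

Definition psi2 : 'M[R]_2 := \matrix_(i < 2, j < 2)
  (if (val i == 0%N) && (val j == 1%N) then 1
   else if (val i == 1%N) && (val j == 0%N) then -1 else 0).

(* psi_{2r} = psi_2 _|_ psi_{2r-2}  (psi_0 is the empty matrix) *)
Fixpoint psi (r : nat) : 'M[R]_(r.*2) :=
  match r with
  | 0%N => 0
  | r'.+1 => perp psi2 (psi r')
  end.

(* elementary subgroup E_k(R): generated by the elementary matrices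
   1 + a e_ij (i <> j); since (1 + a e_ij)^-1 = 1 - a e_ij, the submonoid
   they generate is the subgroup. *)
Inductive elementary (k : nat) : 'M[R]_k -> Prop :=
  | elem_one : elementary 1%:M
  | elem_mul (M : 'M[R]_k) (i j : 'I_k) (a : R) :
      i != j -> elementary M -> elementary (M *m (1%:M + a *: delta_mx i j)).

(* an element of S'(R) presented at some size 2n *)
Definition altrep := {n : nat & 'M[R]_(n.*2)}.

Definition alternating k (A : 'M[R]_k) : Prop :=
  A^T = - A /\ forall i, A i i = 0.

Definition inS' (x : altrep) : Prop :=
  alternating (tagged x) /\ tagged x \in unitmx.

Lemma sim_eq1 n m t : (n.*2 + (m + t).*2 = (m + n + t).*2)%N.
Proof. by rewrite -doubleD addnA (addnC n m). Qed.
Lemma sim_eq2 n m t : (m.*2 + (n + t).*2 = (m + n + t).*2)%N.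
Proof. by rewrite -doubleD addnA. Qed.

Definition simW (x y : altrep) : Prop :=
  let n := tag x in let m := tag y in
  exists (t : nat) (E : 'M[R]_((m + n + t).*2)),
    elementary E /\
    castmx (sim_eq1 n m t, sim_eq1 n m t) (perp (tagged x) (psi (m + t)))
    = E^T *m castmx (sim_eq2 n m t, sim_eq2 n m t) (perp (tagged y) (psi (n + t))) *m E.

(* the group law of W'_E(R) on representatives: orthogonal sum *)
Definition osum (x y : altrep) : altrep :=
  existT _ (tag x + tag y)%N
    (castmx (esym (doubleD _ _), esym (doubleD _ _)) (perp (tagged x) (tagged y))).

(* the neutral element: the class of psi_2 *)
Definition psi2rep : altrep := existT _ 1%N psi2.

(* For G : 'M_k, padI G N is the N x N matrix with G in the upper left block and
   the identity elsewhere: padI G k = G, padI G k.+1 = G _|_ 1. *)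
Definition padI k (G : 'M[R]_k) (N : nat) : 'M[R]_N :=
  \matrix_(i < N, j < N)
    match (insub (val i) : option 'I_k), (insub (val j) : option 'I_k) with
    | Some i', Some j' => G i' j'
    | _, _ => ((val i == val j)%:R : R)
    end.

(* eta(G) = G^t psi_{2n} G for G in GL_{2n}, (G _|_ 1)^t psi_{2n+2} (G _|_ 1)
   for G in GL_{2n+1}; uphalf k = ceil(k/2). *)
Definition eta k (G : 'M[R]_k) : altrep :=
  let r := uphalf k in
  let Gh := padI G r.*2 in
  existT _ r (Gh^T *m psi r *m Gh).

End Defs.

From mathcomp Require Import all_boot all_order all_algebra zify.
Set Implicit Arguments. Unset Strict Implicit. Unset Printing Implicit Defensive.
Import GRing.Theory.
Local Open Scope ring_scope.

(* If [P _|_ 1 = (Q _|_ 1) E] with [E] elementary, then the forms [P^t psi P]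
   and [Q^t psi Q] are stably congruent via [E], because [psi] is additive
   under [_|_]. Padding [G] with an identity block does not change its
   stabilisation; after padding, [G H _|_ 1 = (G _|_ H)(H _|_ H^-1)] and the
   last factor is elementary by Whitehead's lemma; an elementary [E] gives a
   form congruent to [psi]. Since [2] is invertible, [G^t psi G], being
   skew-symmetric, has zero diagonal and so is alternating. *)

Section Perp.
Variable R : comUnitRingType.
Implicit Types p q : nat.

Lemma castmx_mulmx p q (e : p = q) (A B : 'M[R]_p) :
  castmx (e, e) (A *m B) = castmx (e, e) A *m castmx (e, e) B.
Proof. by case: q / e; rewrite !castmx_id. Qed.

Lemma trmx_castmx p q (e : p = q) (A : 'M[R]_p) :
  (castmx (e, e) A)^T = castmx (e, e) A^T.
Proof. by case: q / e; rewrite !castmx_id. Qed.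

Lemma castmx1 p q (e : p = q) : castmx (e, e) (1%:M : 'M[R]_p) = 1%:M.
Proof. by case: q / e; rewrite castmx_id. Qed.

Lemma block_mxE m n (A : 'M[R]_m) (B : 'M[R]_(m, n)) (C : 'M[R]_(n, m))
    (D : 'M[R]_n) i j :
  block_mx A B C D i j = match split i, split j with
                         | inl i1, inl j1 => A i1 j1
                         | inl i1, inr j2 => B i1 j2
                         | inr i2, inl j1 => C i2 j1
                         | inr i2, inr j2 => D i2 j2 end.
Proof.
by rewrite /block_mx !mxE; case: split => ?; rewrite ?mxE; case: split => ?; rewrite ?mxE.
Qed.

Lemma perpE m n (A : 'M[R]_m) (B : 'M[R]_n) i j :
  perp A B i j = match split i, split j with
                 | inl i1, inl j1 => A i1 j1
                 | inr i2, inr j2 => B i2 j2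
                 | _, _ => 0 end.
Proof. by rewrite block_mxE; case: split => ?; case: split => ?; rewrite ?mxE. Qed.

Lemma mulmx_perp m n (A C : 'M[R]_m) (B D : 'M[R]_n) :
  perp A B *m perp C D = perp (A *m C) (B *m D).
Proof. by rewrite /perp mulmx_block !mulmx0 !mul0mx !addr0 !add0r. Qed.

Lemma trmx_perp m n (A : 'M[R]_m) (B : 'M[R]_n) : (perp A B)^T = perp A^T B^T.
Proof. by rewrite /perp tr_block_mx !trmx0. Qed.

Lemma perp1 m n : perp (1%:M : 'M[R]_m) (1%:M : 'M[R]_n) = 1%:M.
Proof. by rewrite /perp -scalar_mx_block. Qed.

Lemma perpN m n (A : 'M[R]_m) (B : 'M[R]_n) : perp (- A) (- B) = - perp A B.
Proof. by rewrite /perp opp_block_mx !oppr0. Qed.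

Lemma perpA m n p (A : 'M[R]_m) (B : 'M[R]_n) (C : 'M[R]_p) :
  perp A (perp B C) =
  castmx (esym (addnA m n p), esym (addnA m n p)) (perp (perp A B) C).
Proof.
have := block_mxAx A 0 0 0 B 0 0 0 C.
by rewrite /= !col_mx0 !row_mx0.
Qed.

Lemma perp_castmxl p p' s N (e : p = p') (e' : p' + s = N) (e'' : p + s = N)
    (A : 'M[R]_p) (B : 'M[R]_s) :
  castmx (e', e') (perp (castmx (e, e) A) B) = castmx (e'', e'') (perp A B).
Proof. by case: p' / e in e' *; rewrite castmx_id (eq_irrelevance e' e''). Qed.

Lemma perp_castmxr m p q (e : p = q) (e' : m + p = m + q)
    (A : 'M[R]_m) (B : 'M[R]_p) :
  castmx (e', e') (perp A B) = perp A (castmx (e, e) B).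
Proof. by case: q / e in e' *; rewrite !castmx_id. Qed.

End Perp.

Section Elementary.
Variable R : comUnitRingType.
Implicit Types p q : nat.

Lemma elementary_castmx p q (e : p = q) (A : 'M[R]_p) :
  elementary A -> elementary (castmx (e, e) A).
Proof. by case: q / e; rewrite castmx_id. Qed.

Lemma elementary_mul p (A B : 'M[R]_p) :
  elementary A -> elementary B -> elementary (A *m B).
Proof.
move=> eA; elim=> [|M i j a neq_ij _ IH]; first by rewrite mulmx1.
by rewrite mulmxA; apply: elem_mul.
Qed.

Lemma perp_transvection1 m q (i j : 'I_m) (a : R) :
  perp (1%:M + a *: delta_mx i j) (1%:M : 'M[R]_q) =
  1%:M + a *: delta_mx (lshift q i) (lshift q j).
Proof.
apply/matrixP=> x y; rewrite perpE !mxE.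
case: splitP => [x1 /= Ex|x2 /= Ex]; case: splitP => [y1 /= Ey|y2 /= Ey];
  rewrite ?mxE -!val_eqE /= Ex Ey //.
- have /negPf -> : (x1 != m + y2 :> nat)%N by have := ltn_ord x1; lia.
  have /negPf -> : (m + y2 != j :> nat)%N by have := ltn_ord j; lia.
  by rewrite andbF mulr0 addr0.
- have /negPf -> : (m + x2 != y1 :> nat)%N by have := ltn_ord y1; lia.
  have /negPf -> : (m + x2 != i :> nat)%N by have := ltn_ord i; lia.
  by rewrite mulr0 addr0.
- have /negPf -> : (m + x2 != i :> nat)%N by have := ltn_ord i; lia.
  by rewrite eqn_add2l mulr0 addr0.
Qed.

Lemma elementary_perp1 m q (A : 'M[R]_m) :
  elementary A -> elementary (perp A (1%:M : 'M[R]_q)).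
Proof.
elim=> [|M i j a neq_ij _ IH]; first by rewrite perp1; apply: elem_one.
rewrite -[X in perp _ X](mulmx1 1%:M) -mulmx_perp perp_transvection1.
by apply: elem_mul => //; rewrite -val_eqE.
Qed.

(* Products of entries of such an [X] vanish, so [1 + X] is the product of the
   transvections [1 + X i j *: delta_mx i j]. *)
Lemma elementary_1add_supp N (p : pred 'I_N) (X : 'M[R]_N) :
  (forall i j, ~~ (p i && ~~ p j) -> X i j = 0) -> elementary (1%:M + X).
Proof.
move=> suppX.
suff elem_seq (s : seq ('I_N * 'I_N)) :
    elementary (1%:M + \sum_(ij <- s) X ij.1 ij.2 *: delta_mx ij.1 ij.2).
  by rewrite {1}(matrix_sum_delta X) pair_big /=.
elim: s => [|ij s IH]; first by rewrite big_nil addr0; apply: elem_one.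
rewrite big_cons.
have [pij|/suppX->] := boolP (p ij.1 && ~~ p ij.2); last by rewrite scale0r add0r.
set S := \sum_(_ <- _) _ in IH *; set T := X ij.1 ij.2 *: delta_mx ij.1 ij.2.
have ST0 : S *m T = 0.
  rewrite mulmx_suml big1 // => kl _.
  rewrite -scalemxAl -scalemxAr mul_delta_mx_cond.
  case: eqP => [->|]; last by rewrite mulr0n !scaler0.
  by rewrite suppX ?scale0r //; case/andP: pij => ->; rewrite andbF.
have -> : 1%:M + (T + S) = (1%:M + S) *m (1%:M + T).
  by rewrite mulmxDr mulmx1 mulmxDl mul1mx ST0 addr0 [T + S]addrC addrA.
by apply: elem_mul => //; apply/eqP => eij; rewrite eij andbN in pij.
Qed.

Lemma elementary_ublock a (X : 'M[R]_a) : elementary (block_mx 1%:M X 0 1%:M).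
Proof.
rewrite (_ : block_mx _ _ _ _ = 1%:M + block_mx 0 X 0 0); last first.
  by rewrite (scalar_mx_block a a) add_block_mx !addr0 !add0r.
apply: (@elementary_1add_supp _ (fun i => i < a)%N) => i j /=.
by rewrite block_mxE; case: splitP => [i1|i2] _; case: splitP => [j1|j2] _; rewrite ?mxE.
Qed.

Lemma elementary_lblock a (Y : 'M[R]_a) : elementary (block_mx 1%:M 0 Y 1%:M).
Proof.
rewrite (_ : block_mx _ _ _ _ = 1%:M + block_mx 0 0 Y 0); last first.
  by rewrite (scalar_mx_block a a) add_block_mx !addr0 !add0r.
apply: (@elementary_1add_supp _ (fun i => ~~ (i < a))%N) => i j /=.
by rewrite block_mxE; case: splitP => [i1|i2] _; case: splitP => [j1|j2] _; rewrite ?mxE.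
Qed.

Lemma elementary_perp_invmx a (H : 'M[R]_a) :
  H \in unitmx -> elementary (perp H (invmx H)).
Proof.
move=> uH.
have -> : perp H (invmx H) =
  block_mx 1%:M H 0 1%:M *m block_mx 1%:M 0 (- invmx H) 1%:M *m block_mx 1%:M H 0 1%:M
  *m (block_mx 1%:M (- 1%:M) 0 1%:M *m block_mx 1%:M 0 1%:M 1%:M
      *m block_mx 1%:M (- 1%:M) 0 1%:M).
  rewrite !mulmx_block !(mul1mx, mulmx1, mul0mx, mulmx0, addr0, add0r, mulmxN, mulNmx).
  by rewrite mulmxV // mulVmx // !(subrr, addNr, add0r, addr0, mul0mx, mulmx0,
    mul1mx, mulmx1, mulmxN, mulNmx, opprK, oppr0).
by repeat apply: elementary_mul; apply: elementary_ublock || apply: elementary_lblock.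
Qed.

End Elementary.

Section Psi.
Variable R : comUnitRingType.

Lemma trmx_psi2 : (psi2 R)^T = - psi2 R.
Proof.
apply/matrixP=> i j; rewrite !mxE.
by case: i => [[|[|i]] ?] //; case: j => [[|[|j]] ?] //=; rewrite ?oppr0 ?opprK.
Qed.

Lemma psi2_sqr : psi2 R *m psi2 R = - 1%:M.
Proof.
apply/matrixP=> i j; rewrite !mxE !big_ord_recl big_ord0 !mxE.
by case: i => [[|[|i]] ?] //; case: j => [[|[|j]] ?] //=;
  rewrite ?(mulr0, mul0r, addr0, add0r, mulr1, mulrN, opprK, oppr0).
Qed.

Lemma psiS r : psi R r.+1 = perp (psi2 R) (psi R r). Proof. by []. Qed.

Lemma trmx_psi r : (psi R r)^T = - psi R r.
Proof.
elim: r => [|r IH]; first by apply/matrixP=> [[]].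
by have := trmx_perp (psi2 R) (psi R r); rewrite trmx_psi2 IH perpN.
Qed.

Lemma psi_sqr r : psi R r *m psi R r = - 1%:M.
Proof.
elim: r => [|r IH]; first by apply/matrixP=> [[]].
by have := mulmx_perp (psi2 R) (psi2 R) (psi R r) (psi R r);
  rewrite psi2_sqr IH perpN perp1.
Qed.

Lemma psi_unit r : psi R r \in unitmx.
Proof.
have psiV : psi R r *m (- psi R r) = 1%:M by rewrite mulmxN psi_sqr opprK.
by case: (mulmx1_unit psiV).
Qed.

Lemma psi1 : psi R 1 = psi2 R.
Proof.
apply/matrixP=> i j; rewrite [LHS]perpE.
case: splitP => [i1 /= Ei|[]//]; case: splitP => [j1 /= Ej|[]//].
by congr (psi2 R _ _); apply: val_inj.
Qed.

Lemma psi_perp a b c (e : (a.*2 + b.*2 = c.*2)%N) :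
  castmx (e, e) (perp (psi R a) (psi R b)) = psi R c.
Proof.
elim: a c e => [|a IH] c e.
  have ecb : c = b by apply/double_inj; rewrite -e.
  subst c; apply/matrixP=> i j; rewrite castmxE perpE.
  case: splitP => [[]//|i2 Ei]; case: splitP => [[]//|j2 Ej].
  by congr (psi R b _ _); apply: val_inj; rewrite /= ?Ei ?Ej.
case: c e => [|c] e; first by exfalso; move: e; lia.
have e1 : (a.*2 + b.*2 = c.*2)%N by move: e; lia.
have e2 : (2 + (a.*2 + b.*2) = 2 + c.*2)%N by rewrite e1.
rewrite !psiS -(IH c e1) -(perp_castmxr e1 e2) perpA castmx_comp.
exact: eq_castmx.
Qed.

End Psi.

Section Padding.
Variable R : comUnitRingType.

Lemma padI_id k (G : 'M[R]_k) : padI G k = G.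
Proof. by apply/matrixP=> i j; rewrite mxE !valK. Qed.

Lemma padI_perp1 k (G : 'M[R]_k) M q N (leq_kM : (k <= M)%N) (e : (M + q = N)%N) :
  castmx (e, e) (perp (padI G M) 1%:M) = padI G N.
Proof.
have insub_out i : (M <= i)%N -> insub i = None :> option 'I_k.
  by move=> leMi; apply: insubF; apply/negbTE; rewrite -leqNgt; lia.
apply/matrixP=> i j; rewrite castmxE perpE [RHS]mxE.
case: splitP => [i1 /= Ei|i2 /= Ei]; case: splitP => [j1 /= Ej|j2 /= Ej];
  rewrite ?mxE Ei Ej //.
- rewrite (insub_out (M + j2)%N) ?leq_addr //.
  have /negPf -> : (i1 != M + j2 :> nat)%N by have := ltn_ord i1; lia.
  by case: insub.
- rewrite (insub_out (M + i2)%N) ?leq_addr //.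
  by have /negPf -> : (M + i2 != j1 :> nat)%N by have := ltn_ord j1; lia.
- by rewrite (insub_out (M + i2)%N) ?leq_addr // eqn_add2l.
Qed.

Lemma padI_addn k (G : 'M[R]_k) M q (leq_kM : (k <= M)%N) :
  padI G (M + q) = perp (padI G M) 1%:M.
Proof. by rewrite -(padI_perp1 G leq_kM (erefl (M + q)%N)) castmx_id. Qed.

Lemma padI_castmx k (G : 'M[R]_k) N (e : (k + (N - k) = N)%N) :
  padI G N = castmx (e, e) (perp G 1%:M).
Proof. by rewrite -(padI_perp1 _ (leqnn k) e) padI_id. Qed.

Lemma padI_mul k (A B : 'M[R]_k) N : (k <= N)%N ->
  padI (A *m B) N = padI A N *m padI B N.
Proof.
move=> leq_kN; have e : (k + (N - k) = N)%N by lia.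
by rewrite !(padI_castmx _ e) -castmx_mulmx mulmx_perp mulmx1.
Qed.

Lemma padI1 k N : (k <= N)%N -> padI (1%:M : 'M[R]_k) N = 1%:M.
Proof.
move=> leq_kN; have e : (k + (N - k) = N)%N by lia.
by rewrite (padI_castmx _ e) perp1 castmx1.
Qed.

Lemma padI_unit k (G : 'M[R]_k) N : (k <= N)%N ->
  G \in unitmx -> padI G N \in unitmx.
Proof.
move=> leq_kN uG; have GV : padI G N *m padI (invmx G) N = 1%:M.
  by rewrite -padI_mul // mulmxV // padI1.
by case: (mulmx1_unit GV).
Qed.

Lemma padI_perp1G k (G : 'M[R]_k) N : (k + 1 <= N)%N ->
  padI (perp G (1%:M : 'M[R]_1)) N = padI G N.
Proof.
move=> leq_k1N; have e : ((k + 1) + (N - (k + 1)) = N)%N by lia.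
rewrite (padI_castmx _ e) -(padI_perp1 G (leq_addr 1 k) e).
by rewrite padI_addn // padI_id.
Qed.

Lemma elementary_padI k (G : 'M[R]_k) N : (k <= N)%N ->
  elementary G -> elementary (padI G N).
Proof.
move=> leq_kN eG; have e : (k + (N - k) = N)%N by lia.
by rewrite (padI_castmx _ e); apply/elementary_castmx/elementary_perp1.
Qed.

End Padding.

Section Eta.
Variable R : comUnitRingType.

Definition pullback_psi n (P : 'M[R]_(n.*2)) : altrep R :=
  existT _ n (P^T *m psi R n *m P).

Lemma eta_pullback k (G : 'M[R]_k) : eta G = pullback_psi (padI G (uphalf k).*2).
Proof. by []. Qed.

Lemma osum_pullback n m (P : 'M[R]_(n.*2)) (Q : 'M[R]_(m.*2)) :
  osum (pullback_psi P) (pullback_psi Q) =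
  pullback_psi (castmx (esym (doubleD n m), esym (doubleD n m)) (perp P Q)).
Proof.
rewrite /osum /=; congr existT.
by rewrite -(psi_perp R (esym (doubleD n m))) trmx_castmx -!castmx_mulmx trmx_perp
  !mulmx_perp.
Qed.

Lemma psi2rep_pullback : psi2rep R = pullback_psi (1%:M : 'M[R]_(1.*2)).
Proof. by rewrite /pullback_psi /psi2rep trmx1 mul1mx mulmx1 psi1. Qed.

Lemma perp_pullback n b c (e : (n.*2 + b.*2 = c.*2)%N) (P : 'M[R]_(n.*2)) :
  castmx (e, e) (perp (P^T *m psi R n *m P) (psi R b)) =
  (castmx (e, e) (perp P 1%:M))^T *m psi R c *m castmx (e, e) (perp P 1%:M).
Proof.
by rewrite -(psi_perp R e) trmx_castmx -!castmx_mulmx trmx_perp trmx1 !mulmx_perp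
  mulmx1 mul1mx.
Qed.

Lemma simW_pullback n m (P : 'M[R]_(n.*2)) (Q : 'M[R]_(m.*2)) t
    (E : 'M[R]_((m + n + t).*2)) :
  elementary E ->
  castmx (sim_eq1 n m t, sim_eq1 n m t) (perp P 1%:M) =
    castmx (sim_eq2 n m t, sim_eq2 n m t) (perp Q 1%:M) *m E ->
  simW (pullback_psi P) (pullback_psi Q).
Proof.
move=> eE ePQ; exists t, E; split => //=.
by rewrite !perp_pullback ePQ !trmx_mul !mulmxA.
Qed.

Lemma skew_diag0 k (A : 'M[R]_k) :
  (2%:R : R) \is a GRing.unit -> A^T = - A -> forall i, A i i = 0.
Proof.
move=> u2 skewA i; have := congr1 (fun B : 'M[R]_k => B i i) skewA; rewrite !mxE => Aii.
by apply: (mulrI u2); rewrite mulr0 mulr_natl mulr2n {2}Aii addrN.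
Qed.

Lemma inS'_pullback n (P : 'M[R]_(n.*2)) :
  (2%:R : R) \is a GRing.unit -> P \in unitmx -> inS' (pullback_psi P).
Proof.
move=> u2 uP.
have skew : (P^T *m psi R n *m P)^T = - (P^T *m psi R n *m P).
  by rewrite !trmx_mul trmxK trmx_psi mulNmx mulmxN mulmxA.
split; first by split; [|apply: skew_diag0].
by rewrite /= !unitmx_mul unitmx_tr psi_unit uP.
Qed.

Lemma leq_uphalf_double k : (k <= (uphalf k).*2)%N.
Proof.
rewrite uphalf_half -{1}(odd_double_half k) doubleD leq_add2r.
by case: odd.
Qed.

Lemma inS'_eta k (G : 'M[R]_k) :
  (2%:R : R) \is a GRing.unit -> G \in unitmx -> inS' (eta G).
Proof.
by move=> u2 uG; apply: inS'_pullback => //; apply: padI_unit (leq_uphalf_double k) uG.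
Qed.

Lemma simW_eta_perp1 k (G : 'M[R]_k) : simW (eta (perp G (1%:M : 'M[R]_1))) (eta G).
Proof.
apply: (@simW_pullback _ _ _ _ 0 1%:M); first exact: elem_one.
rewrite !padI_perp1 ?leq_uphalf_double // ?padI_perp1G ?mulmx1 //.
by have := leq_uphalf_double k; have := leq_uphalf_double (k + 1); lia.
Qed.

Lemma simW_eta_mul k (G H : 'M[R]_k) :
  H \in unitmx -> simW (eta (G *m H)) (osum (eta G) (eta H)).
Proof.
move=> uH; rewrite !eta_pullback osum_pullback.
set r := uphalf k; have leq_kr : (k <= r.*2)%N := leq_uphalf_double k.
set PH := padI H r.*2; have uPH : PH \in unitmx by apply: padI_unit.
have eN : ((r.*2 + r.*2) + (r + 0).*2 = (r + r + r + 0).*2)%N by lia.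
have padI_3r (X : 'M[R]_k) : padI X (r + r + r + 0).*2 =
    castmx (eN, eN) (perp (perp (padI X r.*2) 1%:M) 1%:M).
  by rewrite -padI_addn // (padI_perp1 X _ eN) //; lia.
apply: (@simW_pullback _ _ _ _ 0 (castmx (eN, eN) (perp (perp PH (invmx PH)) 1%:M))).
  exact/elementary_castmx/elementary_perp1/elementary_perp_invmx.
rewrite padI_perp1 // padI_mul; last by lia.
by rewrite !padI_3r (perp_castmxl _ _ eN) -!castmx_mulmx !mulmx_perp mulmxV // !mulmx1.
Qed.

Lemma simW_eta_elementary k (E : 'M[R]_k) : elementary E -> simW (eta E) (psi2rep R).
Proof.
move=> eE; rewrite eta_pullback psi2rep_pullback.
have leq_kr := leq_uphalf_double k.
apply: (@simW_pullback _ _ _ _ 0 (padI E (1 + uphalf k + 0).*2)).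
  by apply: elementary_padI => //; lia.
by rewrite padI_perp1 // perp1 castmx1 mul1mx.
Qed.

End Eta.

Theorem lemma2p4 (R : comUnitRingType) (h2 : (2%:R : R) \is a GRing.unit) :
  (forall k (G : 'M[R]_k), G \in unitmx -> inS' (eta G)) /\
  (forall k (G : 'M[R]_k), G \in unitmx ->
     simW (eta (perp G (1%:M : 'M[R]_1))) (eta G)) /\
  (forall k (G H : 'M[R]_k), G \in unitmx -> H \in unitmx ->
     simW (eta (G *m H)) (osum (eta G) (eta H))) /\
  (forall k (E : 'M[R]_k), elementary E -> simW (eta E) (psi2rep R)).
Proof.
split; first by move=> k G; apply: inS'_eta.
split; first by move=> k G _; apply: simW_eta_perp1.
split; first by move=> k G H _; apply: simW_eta_mul.
exact: simW_eta_elementary.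
Qed.
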